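(* For every $c\in\mathbb{C}$, the orbifold $(\mathcal{W}^c_3)^{\mathbb{Z}_2}$ is strongly generated by $\{L,\ U_{2n,0}\ |\ n\ge 0\}$, where $U_{i,j}=\,:(\partial^iW)(\partial^jW):$.
   Context: For vertex algebra elements $a,b$, write $a(z)b(w)\sim\sum_{n\ge0}(a\circ_n b)(w)(z-w)^{-n-1}$ and $:ab:$ for the normally ordered product; iterated products are nested to the right. For $c\neq-\frac{22}{5}$, $\mathcal{W}^c_3$ is the vertex algebra strongly generated by a Virasoro field $L$ and a weight $3$ primary field $W$ with OPEs $L(z)L(w)\sim \frac c2(z-w)^{-4}+2L(w)(z-w)^{-2}+\partial L(w)(z-w)^{-1}$, $L(z)W(w)\sim 3W(w)(z-w)^{-2}+\partial W(w)(z-w)^{-1}$, $W(z)W(w)\sim \frac c3(z-w)^{-6}+2L(w)(z-w)^{-4}+\partial L(w)(z-w)^{-3}+\big(\frac{32}{22+5c}:LL:+\frac{3(c-2)}{2(22+5c)}\partial^2L\big)(w)(z-w)^{-2}+\big(\frac{32}{22+5c}:(\partial L)L:+\frac{c-2}{3(22+5c)}\partial^3L\big)(w)(z-w)^{-1}$. For $c=-\frac{22}{5}$, $W$ is rescaled by $\sqrt{22+5c}$ and the limit $c\to-\frac{22}{5}$ taken, giving $W(z)W(w)\sim(32:LL:-\frac{48}{5}\partial^2L)(w)(z-w)^{-2}+(32:(\partial L)L:-\frac{32}{15}\partial^3L)(w)(z-w)^{-1}$. For every $c$, $\mathcal{W}^c_3$ is freely generated by $L,W$ (PBW basis of ordered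 monomials in derivatives of $L$ and $W$). $\mathbb{Z}_2$ acts by the automorphism $\theta(L)=L$, $\theta(W)=-W$, and $(\mathcal{W}^c_3)^{\mathbb{Z}_2}$ is the fixed-point subalgebra. A set $S$ strongly generates $\mathcal{A}$ if $\mathcal{A}$ is spanned by normally ordered monomials in elements of $S$ and their derivatives. *)

From HB Require Import structures.
From mathcomp Require Import all_boot all_order all_algebra.
From mathcomp Require Import reals complex.
Set Implicit Arguments. Unset Strict Implicit. Unset Printing Implicit Defensive.
Import Order.TTheory GRing.Theory Num.Theory.
Local Open Scope ring_scope.

Section VA.
Variable K : fieldType.
Variable V : lmodType K.
(* Y n a b  is the n-th product  a_(n) b,  n : int *)
Variables (vac : V) (Y : int -> V -> V -> V).

Definition binz (n : int) (j : nat) : K :=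
  (\prod_(i < j) ((n - (i : nat)%:Z)%:~R : K)) / (j`!)%:R.

Definition borch_lhs (a b c : V) (m n k : int) (N : nat) : V :=
  \sum_(j < N) binz m j *: Y (m + k - (j : nat)%:Z) (Y (n + (j : nat)%:Z) a b) c.
Definition borch_rhs (a b c : V) (m n k : int) (N : nat) : V :=
  \sum_(j < N) ((-1) ^+ j * binz n j) *:
     (Y (m + n - (j : nat)%:Z) a (Y (k + (j : nat)%:Z) b c)
      - ((-1 : K) ^ n) *: Y (n + k - (j : nat)%:Z) b (Y (m + (j : nat)%:Z) a c)).

Definition vertex_algebra : Prop :=
  [/\
      (forall n a, linear (Y n a)) /\
      (forall n b, linear (fun a => Y n a b)),
      (forall a b, exists N : int, forall n, N <= n -> Y n a b = 0),
      (forall n a, Y n vac a = (if n == -1 then a else 0)),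
      (forall a, Y (-1) a vac = a) /\ (forall (n : nat) a, Y n%:Z a vac = 0) &
      (* Borcherds identity (all sums are finite: the truncated sums
         eventually agree with the full sums) *)
      (forall a b c m n k, exists N0 : nat, forall N, (N0 <= N)%N ->
          borch_lhs a b c m n k N = borch_rhs a b c m n k N)].

Definition der (a : V) : V := Y (-2) a vac.
Definition nop (a b : V) : V := Y (-1) a b.

(* OPE  a(z)b(w) ~ sum_n cs_n (w) (z-w)^(-n-1):  a_(n) b = cs_n for all n >= 0
   (and 0 beyond the list) *)
Definition ope (a b : V) (cs : seq V) : Prop :=
  forall n : nat, Y n%:Z a b = nth 0 cs n.

Definition nmono (I : Type) (g : I -> V) (s : seq (I * nat)) : V :=
  foldr (fun p acc => nop (iter p.2 der (g p.1)) acc) vac s.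

Definition in_strong_span (I : Type) (g : I -> V) (x : V) : Prop :=
  exists t : seq (K * seq (I * nat)), x = \sum_(p <- t) p.1 *: nmono g p.2.

Definition va_automorphism (theta : V -> V) : Prop :=
  [/\ linear theta, bijective theta, theta vac = vac &
      forall n a b, theta (Y n a b) = Y n (theta a) (theta b)].
End VA.

Section W3.
Variable K : fieldType.
Variable V : lmodType K.
Variables (vac : V) (Y : int -> V -> V -> V) (c : K) (L W : V).

Notation der := (der vac Y).
Notation nop := (nop Y).

Definition W3_ope : Prop :=
  [/\ ope Y L L [:: der L; 2 *: L; 0; (c / 2) *: vac],
      ope Y L W [:: der W; 3 *: W] &
      if 22 + 5 * c != 0 then
        ope Y W W
          [:: (32 / (22 + 5 * c)) *: nop (der L) L
              + ((c - 2) / (3 * (22 + 5 * c))) *: iter 3 der L;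
              (32 / (22 + 5 * c)) *: nop L L
              + ((3 * (c - 2)) / (2 * (22 + 5 * c))) *: iter 2 der L;
              der L; 2 *: L; 0; (c / 3) *: vac]
      else (* c = -22/5, W rescaled by sqrt(22+5c), limit taken *)
        ope Y W W
          [:: 32 *: nop (der L) L - (32 / 15) *: iter 3 der L;
              32 *: nop L L - (48 / 5) *: iter 2 der L]].

Definition W3gen (b : bool) : V := if b then W else L.

Definition pbw_le (p q : bool * nat) : bool :=
  (~~ p.1 && q.1) || ((p.1 == q.1) && (p.2 <= q.2)%N).
Definition pbw_ordered (s : seq (bool * nat)) : bool := sorted pbw_le s.

Definition W3_PBW_basis : Prop :=
  (forall x : V, exists t : seq (K * seq (bool * nat)),
      all (fun p => pbw_ordered p.2) t /\
      x = \sum_(p <- t) p.1 *: nmono vac Y W3gen p.2) /\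
  (forall (t : seq (seq (bool * nat))) (coef : seq (bool * nat) -> K),
      uniq t -> all pbw_ordered t ->
      \sum_(s <- t) coef s *: nmono vac Y W3gen s = 0 ->
      forall s, s \in t -> coef s = 0).

Definition is_W3 : Prop := [/\ vertex_algebra vac Y, W3_ope & W3_PBW_basis].

Definition U (i j : nat) : V := nop (iter i der W) (iter j der W).

Definition orb_gen (o : option nat) : V :=
  match o with None => L | Some n => U n.*2 0 end.
End W3.

From Pilot Require Import Defs.
From HB Require Import structures.
From mathcomp Require Import all_boot all_order all_algebra.
From mathcomp Require Import reals complex.
From mathcomp Require Import zify ring.
Set Implicit Arguments. Unset Strict Implicit. Unset Printing Implicit Defensive.
Import Order.TTheory GRing.Theory Num.Theory.
Local Open Scope ring_scope.

(* Filter the vertex algebra by the total conformal weight of the generators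
   occurring in a normally ordered monomial (L has weight 2, W weight 3,
   derivatives cost nothing).  From the OPEs and the Borcherds identity,
   F_e (n) F_f lies in F_(e+f-1) for n >= 0 and in F_(e+f) for every n, so
   normal ordering is commutative and associative modulo lower filtration.
   As theta multiplies a monomial by (-1)^(number of W's), its fixed points are
   spanned by the monomials with an even number of W's, and an induction on the
   weight reduces those to monomials in which W only occurs through
   U_(a,b) = :(d^a W)(d^b W):.  Finally, modulo F_5, the relations
   d U_(a,b) = U_(a+1,b) + U_(a,b+1) and U_(a,b) = U_(b,a) express every
   U_(a,b) through derivatives of the U_(2n,0). *)

Section LinearFunction.
Variables (K : fieldType) (V : lmodType K) (f : V -> V).
Hypothesis f_lin : linear f.

Lemma lin0 : f 0 = 0.
Proof.
have := f_lin 1 0 0; rewrite !scale1r addr0 => f00.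
by apply: (addrI (f 0)); rewrite addr0 -f00.
Qed.

Lemma linD x y : f (x + y) = f x + f y.
Proof. by have := f_lin 1 x y; rewrite !scale1r. Qed.

Lemma linZ a x : f (a *: x) = a *: f x.
Proof. by rewrite -[a *: x]addr0 f_lin lin0 addr0. Qed.

Lemma linB x y : f (x - y) = f x - f y.
Proof. by rewrite linD -scaleN1r linZ scaleN1r. Qed.

End LinearFunction.

Section LinearSpan.
Variables (K : fieldType) (V : lmodType K).

Inductive lin_span (A : V -> Prop) : V -> Prop :=
  | span0 : lin_span A 0
  | span_gen x : A x -> lin_span A x
  | spanD x y : lin_span A x -> lin_span A y -> lin_span A (x + y)
  | spanZ k x : lin_span A x -> lin_span A (k *: x).

Lemma spanB A x y : lin_span A x -> lin_span A y -> lin_span A (x - y).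
Proof. by move=> Ax Ay; apply: spanD => //; rewrite -scaleN1r; apply: spanZ. Qed.

Lemma span_sum A (I : Type) (r : seq I) (P : pred I) (F : I -> V) :
  (forall i, P i -> lin_span A (F i)) -> lin_span A (\sum_(i <- r | P i) F i).
Proof. exact: (big_ind (lin_span A) (span0 A) (@spanD A)). Qed.

Lemma span_lin A B (f : V -> V) : linear f ->
  (forall v, A v -> lin_span B (f v)) -> forall x, lin_span A x -> lin_span B (f x).
Proof.
move=> f_lin AB x; elim=> {x} [|v /AB //|x y _ Bx _ By|k x _ Bx].
- by rewrite lin0 //; apply: span0.
- by rewrite linD //; apply: spanD.
- by rewrite linZ //; apply: spanZ.
Qed.

Lemma span_sub A B : (forall v, A v -> B v) -> forall x, lin_span A x -> lin_span B x.
Proof.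
by move=> AB; apply: (span_lin (f := id)) => [a u v|v /AB]; last apply: span_gen.
Qed.

Lemma span_bilin A B C (h : V -> V -> V) :
  (forall y, linear (h^~ y)) -> (forall x, linear (h x)) ->
  (forall u v, A u -> B v -> lin_span C (h u v)) ->
  forall x y, lin_span A x -> lin_span B y -> lin_span C (h x y).
Proof.
move=> hl hr ABC x y Ax By; apply: (span_lin (hl y)) Ax => u Au.
by apply: (span_lin (hr u)) By => v /(ABC u v Au).
Qed.

End LinearSpan.

Section VertexAlgebra.
Variables (K : fieldType) (V : lmodType K).
Hypothesis K_char0 : [pchar K] =i pred0.
Variables (vac : V) (Y : int -> V -> V -> V).
Hypothesis Y_VA : vertex_algebra vac Y.

Local Notation der := (der vac Y).
Local Notation nop := (nop Y).

Lemma natr_eq0_char0 n : (n%:R == 0 :> K) = (n == 0)%N.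
Proof. exact: (pcharf0P K).1 K_char0 n. Qed.

Lemma fact_neq0 n : (n`!%:R : K) != 0.
Proof. by rewrite natr_eq0_char0 -lt0n fact_gt0. Qed.

Lemma binz0 n : binz K n 0 = 1.
Proof. by rewrite /binz big_ord0 fact0 divr1. Qed.

Lemma binz1 n : binz K n 1 = n%:~R.
Proof. by rewrite /binz big_ord1 subr0 factS fact0 divr1. Qed.

Lemma binz0S j : binz K 0 j.+1 = 0.
Proof. by rewrite /binz big_ord_recl subr0 !mul0r. Qed.

Lemma binz_Negz m j : binz K (Negz m) j = (-1) ^+ j * 'C(m + j, j)%:R.
Proof.
rewrite /binz (_ : \prod_(i < j) _ = (-1) ^+ j * ((m + j) ^_ j)%:R); last first.
  elim: j => [|j IHj]; first by rewrite big_ord0 expr0 ffactn0 mulr1.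
  rewrite big_ord_recr /= IHj addnS ffactSS natrM exprS.
  have ->: Negz m - j%:Z = - (m + j).+1%:Z by rewrite NegzE; lia.
  by rewrite mulrNz; ring.
by rewrite -bin_ffact natrM mulrA mulfK ?fact_neq0.
Qed.

Lemma Y_linr n a : linear (Y n a).
Proof. by case: Y_VA => -[]. Qed.

Lemma Y_linl n b : linear (Y n ^~ b).
Proof. by case: Y_VA => -[]. Qed.

Lemma vacY n a : Y n vac a = if n == -1 then a else 0.
Proof. by case: Y_VA. Qed.

Lemma Yr0 n a : Y n a 0 = 0.
Proof. exact: lin0 (Y_linr n a). Qed.

Lemma vacY_neq n a : n != -1 -> Y n vac a = 0.
Proof. by rewrite vacY => /negbTE ->. Qed.

Lemma Yvac_neg1 a : Y (-1) a vac = a.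
Proof. by case: Y_VA => _ _ _ []. Qed.

Lemma Yvac_pos (n : nat) a : Y n a vac = 0.
Proof. by case: Y_VA => _ _ _ []. Qed.

Lemma Y_borcherds a b c m n k : exists N0 : nat, forall N, (N0 <= N)%N ->
  borch_lhs Y a b c m n k N = borch_rhs Y a b c m n k N.
Proof. by case: Y_VA. Qed.

Lemma Y_assoc_formula a b c n k : exists N0 : nat, forall N, (N0 <= N)%N ->
  Y k (Y n a b) c = \sum_(j < N) ((-1) ^+ j * binz K n j) *:
     (Y (n - j%:Z) a (Y (k + j%:Z) b c)
      - ((-1) ^ n) *: Y (n + k - j%:Z) b (Y j%:Z a c)).
Proof.
have [N0 borch] := Y_borcherds a b c 0 n k.
exists N0.+1 => -[//|N] /ltnW/borch.
rewrite /borch_lhs /borch_rhs big_ord_recl binz0 scale1r big1 ?addr0 => [|j _].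
  by rewrite !add0r => ->; apply: eq_bigr => j _; rewrite !add0r.
by rewrite binz0S scale0r.
Qed.

Lemma Y_comm_formula a b c m k : exists N0 : nat, forall N, (N0 <= N)%N ->
  Y m a (Y k b c) - Y k b (Y m a c) =
  \sum_(j < N) binz K m j *: Y (m + k - j%:Z) (Y j%:Z a b) c.
Proof.
have [N0 borch] := Y_borcherds a b c m 0 k.
exists N0.+1 => -[//|N] /ltnW/borch.
rewrite /borch_lhs /borch_rhs [in RHS]big_ord_recl binz0 mulr1 expr0 scale1r.
rewrite [in RHS]big1 ?addr0 => [|j _]; last by rewrite binz0S mulr0 scale0r.
by rewrite add0r expr0z scale1r => <-; apply: eq_bigr => j _; rewrite add0r.
Qed.

Lemma span_ope A a b cs : ope Y a b cs -> List.Forall (lin_span A) cs ->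
  forall n : nat, lin_span A (Y n a b).
Proof.
move=> abE A_cs n; rewrite abE; elim: A_cs n => [|v cs' Av _ IHcs] [|n] //=.
all: exact: span0.
Qed.

Lemma span_Y_assoc A a u z n k :
  (forall l : nat, lin_span A (Y (n - l%:Z) a (Y (k + l%:Z) u z))) ->
  (forall l : nat, lin_span A (Y (n + k - l%:Z) u (Y l a z))) ->
  lin_span A (Y k (Y n a u) z).
Proof.
move=> A1 A2; have [N0 assoc] := Y_assoc_formula a u z n k.
rewrite (assoc N0) //; apply: span_sum => l _.
by apply/spanZ/spanB; [apply: A1 | apply/spanZ/A2].
Qed.

Lemma span_Y_comm A a b z m k :
  (forall l : nat, lin_span A (Y (m + k - l%:Z) (Y l a b) z)) ->
  lin_span A (Y m a (Y k b z) - Y k b (Y m a z)).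
Proof.
move=> A1; have [N0 comm] := Y_comm_formula a b z m k.
by rewrite (comm N0) //; apply: span_sum => l _; apply/spanZ/A1.
Qed.

Lemma sum_ord_single N (F : 'I_N -> V) p (p_lt : (p < N)%N) :
  (forall j : 'I_N, j != p :> nat -> F j = 0) -> \sum_(j < N) F j = F (Ordinal p_lt).
Proof. by move=> F0; rewrite (bigD1 (Ordinal p_lt)) //= big1 ?addr0. Qed.

Lemma signr_m2 : (-1 : K) ^ (-2) = 1.
Proof. by rewrite /exprz /= expr2 mulrNN mulr1 invr1. Qed.

Lemma Y_derl k a c : Y k (der a) c = - k%:~R *: Y (k - 1) a c.
Proof.
(* In the associativity formula for (a_(-2) vac)_(k) c, only the term in which
   the vacuum acts through its mode -1 survives. *)
have [N0 assoc] := Y_assoc_formula a vac c (-2) k.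
rewrite /Defs.der (assoc (N0 + `|k|.+1)%N) ?leq_addr //.
have : (`|k| < N0 + `|k|.+1)%N by lia.
case: k {assoc} => [[|p]|p] /= /ltnW p_lt.
- rewrite mulr0z oppr0 scale0r big1 // => j _.
  rewrite !vacY_neq ?Yr0 ?scaler0 ?subr0 ?scaler0 //; apply/eqP; lia.
- rewrite (sum_ord_single p_lt) => [|j /eqP j_neq]; last first.
    rewrite !vacY_neq ?Yr0 ?scaler0 ?subr0 ?scaler0 //; apply/eqP; lia.
  rewrite vacY_neq ?Yr0 /=; last by apply/eqP; lia.
  rewrite (_ : -2 + p.+1%:Z - p%:Z = -1); last by lia.
  rewrite (_ : p.+1%:Z - 1 = p); last by lia.
  rewrite vacY eqxx signr_m2 scale1r sub0r scalerN -scaleNr.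
  by rewrite binz_Negz add1n binSn signrMK.
- rewrite (sum_ord_single p_lt) => [|j /eqP j_neq]; last first.
    rewrite !vacY_neq ?Yr0 ?scaler0 ?subr0 ?scaler0 //; apply/eqP; lia.
  rewrite [Y (-2 + _ - _) vac _]vacY_neq ?scaler0 ?subr0 /=; last by apply/eqP; lia.
  rewrite (_ : Negz p + p%:Z = -1); last by lia.
  rewrite (_ : -2 - p%:Z = Negz p - 1); last by lia.
  by rewrite vacY eqxx binz_Negz add1n binSn signrMK NegzE mulrNz opprK.
Qed.

Lemma der_Y n a b : der (Y n a b) = Y n (der a) b + Y n a (der b).
Proof.
have [N0 assoc] := Y_assoc_formula a b vac n (-2).
rewrite /Defs.der (assoc (N0 + 2)%N) ?leq_addr // addn2 2!big_ord_recl big1 => [|j _].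
  rewrite !Yvac_pos !Yr0 !scaler0 !subr0 addr0 expr0 mul1r binz0 scale1r /=.
  by rewrite (_ : -2 + 1%:Z = -1) // Yvac_neg1 expr1 binz1 Y_derl mulN1r scaleNr addrC.
rewrite (_ : -2 + _ = (j : nat)%:Z); last by rewrite /= /bump /=; lia.
by rewrite !Yvac_pos !Yr0 scaler0 subr0 scaler0.
Qed.

Lemma iter_derZ k a x : iter k der (a *: x) = a *: iter k der x.
Proof. by elim: k => //= k ->; rewrite /Defs.der (linZ (Y_linl _ _)). Qed.

Lemma Y_Negz r a c : Y (Negz r) a c = (r`!%:R)^-1 *: nop (iter r der a) c.
Proof.
elim: r a => [|r IHr] a; first by rewrite fact0 invr1 scale1r.
have ->: Negz r.+1 = Negz r - 1 by rewrite !NegzE; lia.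
have Sr_neq0 : (r.+1%:R : K) != 0 by rewrite natr_eq0_char0.
apply: (scalerI Sr_neq0).
have ->: r.+1%:R *: Y (Negz r - 1) a c = Y (Negz r) (der a) c.
  by rewrite Y_derl NegzE mulrNz opprK.
rewrite IHr iterSr scalerA.
by rewrite factS natrM invfM mulrA divff ?mul1r.
Qed.

Lemma Y_Negz_vac r a : Y (Negz r) a vac = (r`!%:R)^-1 *: iter r der a.
Proof. by rewrite Y_Negz /Defs.nop Yvac_neg1. Qed.

Lemma Y_skew a b (i : nat) : exists N0 : nat, forall N, (N0 <= N)%N ->
  Y i b a = - (-1) ^+ i *: \sum_(j < N) (-1) ^+ j *: Y (Negz j) (Y (i + j)%N a b) vac.
Proof.
have [N0 borch] := Y_borcherds a b vac (-1) i 0.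
exists N0.+1 => -[//|N] /ltnW/borch.
rewrite /borch_lhs /borch_rhs [in RHS]big_ord_recl [in RHS]big1 => [|j _]; last first.
  rewrite add0r (_ : -1 + (lift ord0 j : nat)%:Z = (j : nat)%:Z); last first.
    by rewrite /= /bump /=; lia.
  by rewrite !Yvac_pos !Yr0 scaler0 subrr scaler0.
rewrite /= expr0 binz0 mulr1 scale1r add0r Yvac_pos Yr0 !addr0 Yvac_neg1 sub0r.
rewrite (eq_bigr (fun j : 'I_N.+1 => (-1) ^+ j *: Y (Negz j) (Y (i + j)%N a b) vac)).
  move=> ->; rewrite -exprnP scalerN scaleNr opprK scalerA -exprD -signr_odd oddD.
  by rewrite addbb expr0 scale1r.
move=> j _; rewrite binz_Negz add0n binn mulr1 (_ : -1 - _ = Negz j) //; lia.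
Qed.

Section Filtration.
Variables (I : Type) (g : I -> V) (wt : I -> nat).

Local Notation nm := (nmono vac Y g).

Definition deg (s : seq (I * nat)) : nat := sumn [seq wt p.1 | p <- s].

Lemma deg_cons i k s : deg ((i, k) :: s) = (wt i + deg s)%N.
Proof. by []. Qed.

Definition nmono_in (P : pred (seq (I * nat))) (v : V) : Prop :=
  exists2 s, P s & v = nm s.

Lemma in_strong_spanP x : in_strong_span vac Y g x <-> lin_span (nmono_in predT) x.
Proof.
split=> [[t ->]|]; first by apply: span_sum => p _; apply/spanZ/span_gen; exists p.2.
elim=> [|_ [s _ ->]|_ _ _ [t1 ->] _ [t2 ->]|k _ _ [t ->]].
- by exists [::]; rewrite big_nil.
- by exists [:: (1, s)]; rewrite big_seq1 scale1r.
- by exists (t1 ++ t2); rewrite big_cat.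
exists [seq (k * p.1, p.2) | p <- t]; rewrite big_map scaler_sumr.
by apply: eq_bigr => p _; rewrite scalerA.
Qed.

Definition filt (e : nat) : V -> Prop := lin_span (nmono_in (fun s => deg s <= e)%N).

Lemma nmono_cons p s : nm (p :: s) = nop (iter p.2 der (g p.1)) (nm s).
Proof. by []. Qed.

Lemma filt_le e e' x : (e <= e')%N -> filt e x -> filt e' x.
Proof.
move=> le_ee'; apply: span_sub => _ [s le_se ->].
by exists s => //; apply: leq_trans le_ee'.
Qed.

Lemma filt_nmono e s : (deg s <= e)%N -> filt e (nm s).
Proof. by move=> le_se; apply: span_gen; exists s. Qed.

Lemma filt_vac e : filt e vac.
Proof. exact: (filt_nmono (s := [::])). Qed.

Lemma filt_cons i k e x : filt e x -> filt (wt i + e) (nop (iter k der (g i)) x).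
Proof.
apply: span_lin; first exact: Y_linr.
by move=> _ [s le_se ->]; apply: (filt_nmono (s := (i, k) :: s)); rewrite /deg /= leq_add2l.
Qed.

Lemma filt_gen i k e : (wt i <= e)%N -> filt e (iter k der (g i)).
Proof.
move=> le_ie; rewrite -[iter k der _]Yvac_neg1.
by apply: (filt_nmono (s := [:: (i, k)])); rewrite /deg /= addn0.
Qed.

Lemma filt_der e x : filt e x -> filt e (der x).
Proof.
apply: span_lin; first exact: Y_linl.
move=> _ [s le_se ->]; apply: filt_le le_se _; elim: s => [|[i k] s IHs] /=.
  by rewrite /Defs.der vacY_neq //; apply: span0.
rewrite /Defs.nop der_Y; apply: spanD; last exact: filt_cons.
exact: (filt_nmono (s := (i, k.+1) :: s)).
Qed.

Lemma filt_iter_der e k x : filt e x -> filt e (iter k der x).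
Proof. by move=> Fx; elim: k => //= k; apply: filt_der. Qed.

Lemma filt_Negz_gen i k j e x :
  filt e x -> filt (wt i + e) (Y (Negz j) (iter k der (g i)) x).
Proof. by move=> Fx; rewrite Y_Negz -iterD; apply/spanZ/filt_cons. Qed.

Lemma filt_Ypos_iter_derl e a c :
  (forall n : nat, filt e (Y n a c)) -> forall k (n : nat), filt e (Y n (iter k der a) c).
Proof.
move=> FY; elim=> [|k IHk] n; first exact: FY.
rewrite iterS Y_derl; case: n => [|n].
  by rewrite mulr0z oppr0 scale0r; apply: span0.
by rewrite (_ : n.+1%:Z - 1 = n); [apply/spanZ/IHk | lia].
Qed.

Section GoodFiltration.
Hypothesis wt_gt0 : forall i, (0 < wt i)%N.
Hypothesis filt_base : forall i j (n : nat), filt (wt i + wt j - 1) (Y n (g i) (g j)).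

Lemma filt_Y_gen_der i j k m (n : nat) :
  filt (wt i + wt j - 1) (Y n (iter k der (g i)) (iter m der (g j))).
Proof.
apply: filt_Ypos_iter_derl => {k}n; elim: m n => [|m IHm] n; first exact: filt_base.
rewrite iterS (_ : Y n _ _ = der (Y n (g i) (iter m der (g j)))
                            - Y n (der (g i)) (iter m der (g j))); last first.
  by rewrite der_Y addrC addKr.
apply: spanB; first exact/filt_der/IHm.
rewrite Y_derl; case: n => [|n]; first by rewrite mulr0z oppr0 scale0r; apply: span0.
by rewrite (_ : n.+1%:Z - 1 = n); [apply/spanZ/IHm | lia].
Qed.

Definition products_bounded N := forall e f x z, (e + f <= N)%N -> filt e x -> filt f z ->
  (forall n : nat, filt (e + f - 1) (Y n x z)) /\ filt (e + f) (nop x z).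

Lemma products_bounded_Y N e f x z : products_bounded N -> (e + f <= N)%N ->
  filt e x -> filt f z -> forall k : int, filt (e + f) (Y k x z).
Proof.
move=> bounded le_efN Fx Fz [n|r].
  by apply: filt_le (leq_subr 1 _) _; apply: (bounded _ _ _ _ le_efN Fx Fz).1.
by rewrite Y_Negz; apply/spanZ/(bounded _ _ _ _ le_efN _ Fz).2/filt_iter_der.
Qed.

Lemma products_step_gen N i k t : products_bounded N.-1 -> (wt i + deg t <= N)%N ->
  forall n : nat, filt (wt i + deg t - 1) (Y n (iter k der (g i)) (nm t)).
Proof.
move=> bounded le_N n; case: t le_N => [_|[j m] t]; first by rewrite Yvac_pos; apply: span0.
rewrite deg_cons => le_N; have wt_i := wt_gt0 i; have wt_j := wt_gt0 j.
rewrite -[Y n _ _](subrK (nop (iter m der (g j)) (Y n (iter k der (g i)) (nm t)))).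
apply: spanD; first apply: span_Y_comm => l.
  apply: (filt_le _ (products_bounded_Y bounded _ (filt_Y_gen_der i j k m l)
    (filt_nmono (leqnn (deg t))) _)); lia.
have le_N' : (wt i + deg t <= N.-1)%N by lia.
have := (bounded _ _ _ _ le_N' (filt_gen k (leqnn (wt i))) (filt_nmono (leqnn (deg t)))).1 n.
by move/(filt_cons j m); apply: filt_le; lia.
Qed.

Lemma products_step_cons N i k s t : products_bounded N.-1 -> (0 < deg s)%N ->
  (wt i + deg s + deg t <= N)%N ->
  (forall n : nat, filt (wt i + deg s + deg t - 1) (Y n (nm ((i, k) :: s)) (nm t))) /\
  filt (wt i + deg s + deg t) (nop (nm ((i, k) :: s)) (nm t)).
Proof.
move=> bounded deg_s le_N; have wt_i := wt_gt0 i.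
have Fa := filt_gen k (leqnn (wt i)).
have Fu := filt_nmono (leqnn (deg s)); have Fz := filt_nmono (leqnn (deg t)).
have le_at : (wt i + deg t <= N.-1)%N by lia.
have le_ut : (deg s + deg t <= N.-1)%N by lia.
have inner_a q (l : nat) :
    filt (wt i + deg s + deg t - 1) (Y q (nm s) (Y l (iter k der (g i)) (nm t))).
  have le_u_at : (deg s + (wt i + deg t - 1) <= N.-1)%N by lia.
  have Faz := (bounded _ _ _ _ le_at Fa Fz).1 l.
  by apply: (filt_le _ (products_bounded_Y bounded le_u_at Fu Faz q)); lia.
rewrite nmono_cons /=; split=> [n|]; apply: span_Y_assoc => l.
- rewrite (_ : -1 - l%:Z = Negz l) -?PoszD; last by lia.
  apply: (filt_le _ (filt_Negz_gen i k l ((bounded _ _ _ _ le_ut Fu Fz).1 (n + l)%N))).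
  lia.
- exact: inner_a.
- rewrite (_ : -1 - l%:Z = Negz l); last by lia.
  apply: (filt_le _ (filt_Negz_gen i k l (products_bounded_Y bounded le_ut Fu Fz _))).
  by rewrite !addnA.
- by apply: (filt_le _ (inner_a _ _)); apply: leq_subr.
Qed.

Lemma products_bounded_all N : products_bounded N.
Proof.
elim/ltn_ind: N => N IH.
suff bounded_nmono s t : (deg s + deg t <= N)%N ->
    (forall n : nat, filt (deg s + deg t - 1) (Y n (nm s) (nm t))) /\
    filt (deg s + deg t) (nop (nm s) (nm t)).
  move=> e f x z le_N Fx Fz; split=> [n|].
    apply: (span_bilin (@Y_linl n) (Y_linr n) _ Fx Fz) => _ _ [s le_s ->] [t le_t ->].
    by apply: (filt_le _ ((bounded_nmono s t _).1 n)); lia.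
  apply: (span_bilin (@Y_linl (-1)) (Y_linr (-1)) _ Fx Fz) => _ _ [s le_s ->] [t le_t ->].
  by apply: (filt_le _ (bounded_nmono s t _).2); lia.
case: s => [|[i k] s] le_N.
  rewrite (_ : nm [::] = vac) // add0n; split=> [n|].
    by rewrite vacY_neq //; apply: span0.
  by rewrite /Defs.nop vacY; apply: filt_nmono.
have bounded : products_bounded N.-1.
  by apply: IH; have := wt_gt0 i; rewrite deg_cons in le_N; lia.
rewrite deg_cons in le_N *; case: s le_N => [|p s] le_N.
  rewrite addn0 in le_N *; rewrite nmono_cons /= [nop _ vac]Yvac_neg1; split=> [n|].
    exact: (products_step_gen k bounded le_N).
  by apply: (filt_nmono (s := (i, k) :: t)); rewrite deg_cons.
apply: (products_step_cons k bounded _ le_N).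
by case: p {le_N} => j m; rewrite deg_cons; have := wt_gt0 j; lia.
Qed.

Lemma filt_Ypos e f x z (n : nat) : filt e x -> filt f z -> filt (e + f - 1) (Y n x z).
Proof.
by move=> Fx Fz; apply: (@products_bounded_all (e + f)%N _ _ _ _ (leqnn _) Fx Fz).1.
Qed.

Lemma filt_Y e f x z : filt e x -> filt f z -> forall k : int, filt (e + f) (Y k x z).
Proof. exact: products_bounded_Y (@products_bounded_all (e + f)%N) (leqnn _). Qed.

(* The positivity assumptions below only guard against the truncation of [_ - 1]. *)
Lemma filt_nop_comm e1 e2 e3 x y z :
  filt e1 x -> filt e2 y -> filt e3 z -> (0 < e1 + e2)%N ->
  filt (e1 + e2 + e3 - 1) (nop x (nop y z) - nop y (nop x z)).
Proof.
move=> Fx Fy Fz e12_gt0; apply: span_Y_comm => l.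
by apply: (filt_le _ (filt_Y (filt_Ypos l Fx Fy) Fz _)); lia.
Qed.

Lemma filt_nop_assoc e1 e2 e3 x y z :
  filt e1 x -> filt e2 y -> filt e3 z -> (0 < e1)%N -> (0 < e2)%N ->
  filt (e1 + e2 + e3 - 1) (nop (nop x y) z - nop x (nop y z)).
Proof.
move=> Fx Fy Fz e1_gt0 e2_gt0.
have Fyxz q (l : nat) : filt (e1 + e2 + e3 - 1) (Y q y (Y l x z)).
  by apply: (filt_le _ (filt_Y Fy (filt_Ypos l Fx Fz) _)); lia.
have [N0 assoc] := Y_assoc_formula x y z (-1) (-1).
rewrite /Defs.nop (assoc N0.+1) // big_ord_recl /= expr0 binz0 mulr1 scale1r.
rewrite ?subr0 ?addr0 addrAC; apply: spanD.
  by rewrite addrAC subrr add0r -scaleNr; apply/spanZ/Fyxz.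
apply: span_sum => l _; apply/spanZ/spanB; last exact/spanZ/Fyxz.
rewrite (_ : -1 - _ = Negz l.+1); last by rewrite /bump /=; lia.
rewrite (_ : -1 + _ = (l : nat)%:Z); last by rewrite /bump /=; lia.
by apply: (filt_le _ (filt_Y Fx (filt_Ypos l Fy Fz) _)); lia.
Qed.

End GoodFiltration.
End Filtration.

Section W3.
Variables (c : K) (L W : V).
Hypothesis W3_OPE : W3_ope vac Y c L W.

Local Notation gen := (W3gen L W).

Definition W3wt (b : bool) : nat := if b then 3%N else 2%N.

Local Notation F := (filt gen W3wt).

Lemma W3wt_gt0 b : (0 < W3wt b)%N.
Proof. by case: b. Qed.

Lemma filt_L e k : (2 <= e)%N -> F e (iter k der L).
Proof. exact: (filt_gen gen (i := false)). Qed.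

Lemma filt_W e k : (3 <= e)%N -> F e (iter k der W).
Proof. exact: (filt_gen gen (i := true)). Qed.

Lemma filt_LL e k : (4 <= e)%N -> F e (nop (iter k der L) L).
Proof.
move=> le4e; apply: (filt_le _ (filt_cons false k (filt_L 0 (leqnn 2)))).
exact: le4e.
Qed.

Ltac filt_W3_ope :=
  repeat first
    [ apply: List.Forall_nil | apply: List.Forall_cons
    | apply: spanB | apply: spanD | apply: spanZ | apply: span0
    | apply: filt_vac
    | apply: (filt_LL 0) | apply: (filt_LL 1)
    | apply: (filt_L 0) | apply: (filt_L 1) | apply: filt_L
    | apply: (filt_W 0) | apply: (filt_W 1) | by [] ].

Lemma W3_filt_base X Z (n : nat) : F (W3wt X + W3wt Z - 1) (Y n (gen X) (gen Z)).
Proof.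
case: W3_OPE => LL LW WW; case: X; case: Z => /=.
- by case: ifP WW => _ WW; apply: (span_ope WW); filt_W3_ope.
- have [N0 skew] := Y_skew L W n; rewrite (skew N0) //.
  apply/spanZ/span_sum => j _; rewrite Y_Negz_vac; apply/spanZ/spanZ/filt_iter_der.
  by apply: (span_ope LW); filt_W3_ope.
- by apply: (span_ope LW); filt_W3_ope.
- by apply: (span_ope LL); filt_W3_ope.
Qed.

Local Notation W3_filt_Y := (filt_Y W3wt_gt0 W3_filt_base).
Local Notation W3_nop_comm := (filt_nop_comm W3wt_gt0 W3_filt_base).
Local Notation W3_nop_assoc := (filt_nop_assoc W3wt_gt0 W3_filt_base).

Local Notation U := (U vac Y W).

Definition U_red (x : V) : Prop :=
  lin_span (fun v => F 5 v \/ exists n k, v = iter k der (U n.*2 0)) x.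

Lemma U_skew a b : F 5 (U a b - U b a).
Proof.
have := W3_nop_comm (filt_W a (leqnn 3)) (filt_W b (leqnn 3)) (filt_vac gen W3wt 0) isT.
by rewrite /Defs.nop !Yvac_neg1.
Qed.

Lemma der_U a b : der (U a b) = U a.+1 b + U a b.+1.
Proof. by rewrite /U /Defs.nop der_Y -!iterS. Qed.

Lemma U_red_der x : U_red x -> U_red (der x).
Proof.
apply: span_lin; first exact: Y_linl.
move=> v [Fv | [n [k ->]]]; apply: span_gen; first by left; apply: filt_der.
by right; exists n, k.+1.
Qed.

Lemma U_red_U_sign n : (forall a b, (a + b < n)%N -> U_red (U a b)) ->
  forall a b, (a + b = n)%N -> U_red (U a b - (-1) ^+ b *: U n 0).
Proof.
move=> IH a b; elim: b a => [|b IHb] a abn.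
  by rewrite addn0 in abn; rewrite abn expr0 scale1r subrr; apply: span0.
rewrite (_ : _ - _ = der (U a b) - (U a.+1 b - (-1) ^+ b *: U n 0)).
  by apply: spanB; [apply/U_red_der/IH | apply: IHb]; lia.
by rewrite der_U exprS mulN1r scaleNr opprB opprK [RHS]addrC addrA subrK addrC.
Qed.

Lemma U_red_U a b : U_red (U a b).
Proof.
move: {2}(a + b)%N (erefl (a + b)%N) => n; elim/ltn_ind: n a b => n IH a b abn.
have IH' a' b' : (a' + b' < n)%N -> U_red (U a' b') by move=> lt; apply: (IH _ lt).
have U_red_n0 : U_red (U n 0).
  (* For odd n, U_(0,n) = -U_(n,0) modulo U_red while U_(0,n) = U_(n,0) modulo F_5. *)
  have [n_odd | n_even] := boolP (odd n); last first.
    apply: span_gen; right; exists n./2, 0%N.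
    by rewrite -[n in LHS]odd_double_half (negbTE n_even).
  have U_red_skew : U_red (U n 0 - U 0 n) by apply: span_gen; left; apply: U_skew.
  have := spanD (U_red_U_sign IH' (add0n n)) U_red_skew.
  rewrite addrC subrKA -signr_odd n_odd scaleN1r opprK.
  rewrite -mulr2n -scaler_nat => /(spanZ 2%:R^-1).
  by rewrite scalerA mulVf ?scale1r // natr_eq0_char0.
have := spanD (U_red_U_sign IH' abn) (spanZ ((-1) ^+ b) U_red_n0).
by rewrite subrK.
Qed.

Section Orbifold.
Variable theta : V -> V.
Hypothesis theta_aut : va_automorphism vac Y theta.
Hypotheses (thetaL : theta L = L) (thetaW : theta W = - W).

Local Notation og := (orb_gen vac Y L W).
Local Notation S := (lin_span (nmono_in og predT)).
Local Notation nm := (nmono vac Y gen).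

Definition Wcount (s : seq (bool * nat)) : nat := count fst s.

Lemma theta_lin : linear theta. Proof. by case: theta_aut. Qed.
Lemma theta_vac : theta vac = vac. Proof. by case: theta_aut. Qed.
Lemma theta_Y n a b : theta (Y n a b) = Y n (theta a) (theta b).
Proof. by case: theta_aut. Qed.

Lemma theta_iter_der k x : theta (iter k der x) = iter k der (theta x).
Proof. by elim: k => //= k <-; rewrite /Defs.der theta_Y theta_vac. Qed.

Lemma theta_nmono s : theta (nm s) = (-1) ^+ Wcount s *: nm s.
Proof.
elim: s => [|[b k] s IHs] /=; first by rewrite theta_vac scale1r.
rewrite /Defs.nop theta_Y theta_iter_der IHs (linZ (Y_linr _ _)).
case: b => /=; last by rewrite thetaL add0n.
by rewrite thetaW -scaleN1r iter_derZ (linZ (Y_linl _ _)) scalerA exprS mulrC.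
Qed.

Lemma theta_U a b : theta (U a b) = U a b.
Proof.
rewrite /U /Defs.nop theta_Y !theta_iter_der thetaW -scaleN1r !iter_derZ.
by rewrite (linZ (Y_linl _ _)) (linZ (Y_linr _ _)) scalerA mulrNN mulr1 scale1r.
Qed.

Lemma theta_S x : S x -> theta x = x.
Proof.
elim=> [|_ [s _ ->]|u v _ theta_u _ theta_v|k u _ theta_u].
- exact: lin0 theta_lin.
- elim: s => [|[[n|] k] s IHs] /=; first exact: theta_vac.
    by rewrite /Defs.nop theta_Y theta_iter_der theta_U IHs.
  by rewrite /Defs.nop theta_Y theta_iter_der thetaL IHs.
- by rewrite (linD theta_lin) theta_u theta_v.
- by rewrite (linZ theta_lin) theta_u.
Qed.

Lemma sym_linear (f : V -> V) : linear f -> linear (fun y => f y + theta (f y)).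
Proof.
by move=> f_lin a u v; rewrite f_lin (linD theta_lin) (linZ theta_lin) scalerDr addrACA.
Qed.

Lemma S_cons o k x : S x -> S (nop (iter k der (og o)) x).
Proof.
apply: span_lin; first exact: Y_linr.
by move=> _ [s _ ->]; apply: span_gen; exists ((o, k) :: s).
Qed.

Lemma S_sym (P : pred (seq (bool * nat))) x :
  (forall s, P s -> ~~ odd (Wcount s) -> S (nm s)) ->
  lin_span (nmono_in gen P) x -> S (x + theta x).
Proof.
move=> S_even; apply: (span_lin (sym_linear (f := id) (fun _ _ _ => erefl))).
move=> _ [s Ps ->] /=; rewrite theta_nmono -signr_odd.
case: (boolP (odd _)) => [_ | s_even]; first by rewrite scaleN1r subrr; apply: span0.
by rewrite scale1r; apply: spanD; apply: S_even.
Qed.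

Lemma S_fixed x : theta x = x -> S (x + theta x) -> S x.
Proof.
move=> ->; rewrite -mulr2n -scaler_nat => /(spanZ 2%:R^-1).
by rewrite scalerA mulVf ?scale1r // natr_eq0_char0.
Qed.

Local Notation degW := (deg W3wt).

Section DegreeInduction.
Variable d : nat.
Hypothesis S_even_below : forall s, (degW s < d)%N -> ~~ odd (Wcount s) -> S (nm s).

Lemma S_sym_filt e x : (e < d)%N -> F e x -> S (x + theta x).
Proof.
move=> lt_ed; apply: S_sym => s le_se; apply: S_even_below.
exact: leq_ltn_trans le_se lt_ed.
Qed.

Lemma S_fixed_filt e x : (e < d)%N -> F e x -> theta x = x -> S x.
Proof. by move=> lt_ed Fx fixed; apply: S_fixed fixed (S_sym_filt lt_ed Fx). Qed.

Lemma theta_nmono_even s : ~~ odd (Wcount s) -> theta (nm s) = nm s.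
Proof. by move=> s_even; rewrite theta_nmono -signr_odd (negbTE s_even) scale1r. Qed.

Lemma S_nop_U r k j : (degW r + 6 <= d)%N -> ~~ odd (Wcount r) -> S (nop (U k j) (nm r)).
Proof.
move=> le_rd r_even; have Sr : S (nm r) by apply: S_even_below; lia.
apply: S_fixed; first by rewrite /Defs.nop theta_Y theta_U theta_nmono_even.
(* Apply y |-> z + theta z, with z = :y (nm r):, to the decomposition of U_(k,j) in U_red. *)
apply: (span_lin (sym_linear (Y_linl (-1) (nm r))) _ (U_red_U k j)) => v [Fv | [n [m ->]]].
  apply: (S_sym_filt (e := 5 + degW r)); first lia.
  exact: W3_filt_Y Fv (filt_nmono gen (leqnn (degW r))) (-1).
have S_nop : S (nop (iter m der (og (Some n))) (nm r)) by apply: S_cons.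
by rewrite (theta_S S_nop); apply: spanD.
Qed.

Lemma S_WW r k j : (degW r + 6 <= d)%N -> ~~ odd (Wcount r) ->
  S (nm [:: (true, k), (true, j) & r]).
Proof.
move=> le_rd r_even; set s := [:: _, _ & _]; set Q := nop (U k j) (nm r).
have SQ : S Q by apply: S_nop_U.
have -> : nm s = Q - (Q - nm s) by rewrite opprB addrC subrK.
apply: (spanB SQ); apply: S_fixed_filt (W3_nop_assoc (filt_W k (leqnn 3))
  (filt_W j (leqnn 3)) (filt_nmono gen (leqnn (degW r))) isT isT) _; first lia.
rewrite (linB theta_lin) (theta_S SQ) (theta_nmono_even (s := s)) //.
by rewrite /s /Wcount /= negbK.
Qed.

Lemma S_WL r k j : (degW r + 5 <= d)%N -> odd (Wcount r) ->
  S (nm [:: (true, k), (false, j) & r]).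
Proof.
move=> le_rd r_odd; set s := [:: _, _ & _].
set A := nop (iter j der L) (nm ((true, k) :: r)).
have SA : S A.
  by apply: (S_cons None); apply: S_even_below; rewrite ?deg_cons /= ?r_odd //; lia.
rewrite -(subrK A (nm s)); apply: (spanD _ SA).
apply: S_fixed_filt (W3_nop_comm (filt_W k (leqnn 3)) (filt_L j (leqnn 2))
  (filt_nmono gen (leqnn (degW r))) isT) _; first lia.
by rewrite (linB theta_lin) (theta_S SA) (theta_nmono_even (s := s)) //= r_odd.
Qed.

End DegreeInduction.

Lemma S_even_nmono s : ~~ odd (Wcount s) -> S (nm s).
Proof.
move: {2}(degW s) (leqnn (degW s)) => d; elim/ltn_ind: d s => d IH s le_sd s_even.
have below s' : (degW s' < d)%N -> ~~ odd (Wcount s') -> S (nm s').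
  by move=> lt_s'd; apply: IH lt_s'd s' (leqnn _).
rewrite /Wcount in s_even below; case: s le_sd s_even => [|[[|] k] s] /=.
- by move=> _ _; apply: span_gen; exists [::].
- case: s => [|[[|] j] r]; rewrite !deg_cons /= => le_sd; rewrite ?add0n ?negbK //.
    by move=> r_even; apply: (S_WW below) => //; lia.
  by move=> r_odd; apply: (S_WL below) => //; lia.
- rewrite deg_cons /= => le_sd s_even; apply: (S_cons None); apply: below => //; lia.
Qed.

End Orbifold.
End W3.
End VertexAlgebra.

Theorem lemma4p1 (R : realType) (c : R[i]) (V : lmodType R[i]) (vac : V)
    (Y : int -> V -> V -> V) (L W : V) (theta : V -> V) :
  is_W3 vac Y c L W ->
  va_automorphism vac Y theta -> theta L = L -> theta W = - W ->
  (forall x : V, theta x = x <-> in_strong_span vac Y (orb_gen vac Y L W) x).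
Proof.
move=> [Y_VA W3_OPE [PBW_span _]] theta_aut thetaL thetaW x.
have C_char0 := pchar_num R[i].
have S_even := S_even_nmono C_char0 Y_VA W3_OPE theta_aut thetaL thetaW.
have S_sym_all := S_sym Y_VA theta_aut thetaL thetaW (P := predT).
rewrite in_strong_spanP; split=> [fixed | /(theta_S Y_VA theta_aut thetaL thetaW)//].
apply: (S_fixed C_char0 fixed); have [t [_ ->]] := PBW_span x.
apply: S_sym_all => [s _|]; first exact: S_even.
by apply: span_sum => p _; apply/spanZ/span_gen; exists p.2.
Qed.
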